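(* Let $q$ be a power of a prime $p$ and let $X\subset\mathbb{P}^n$ be a Frobenius nonclassical hypersurface over $\mathbb{F}_q$ of degree $d\not\equiv 0\pmod p$. Then $X$ meets every line $L\subset\mathbb{P}^n$ defined over $\mathbb{F}_q$ in at least one $\mathbb{F}_q$-point.
   Context: A hypersurface $X=\{F=0\}$ over $\mathbb{F}_q$ is Frobenius nonclassical if $F$ divides $\sum_{i=0}^n x_i^q\frac{\partial F}{\partial x_i}$. *)

From HB Require Import structures.
From mathcomp Require Import all_boot all_order all_algebra all_field.
From mathcomp Require Import mpoly.
Set Implicit Arguments. Unset Strict Implicit. Unset Printing Implicit Defensive.
Import GRing.Theory.
Local Open Scope ring_scope.

Definition frobenius_nonclassical (n : nat) (K : finFieldType) (F : {mpoly K[n]}) : Prop :=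
  exists G : {mpoly K[n]},
    \sum_(i < n) 'X_i ^+ #|K| * mderiv i F = G * F.

(* u, v in K^(n+1) are linearly independent: they span an F_q-rational line of P^n. *)
Definition lin_indep2 (n : nat) (K : fieldType) (u v : 'I_n -> K) : Prop :=
  forall a b : K, (forall i, a * u i + b * v i = 0) -> a = 0 /\ b = 0.

(* Restrict F to the line: g(t) = F(t u + v) is a polynomial of degree at most d whose
   t^d-coefficient is F(u).  If g has a root in F_q, or F(u) = 0, we are done.  Otherwise
   subtract Euler's identity  sum_i x_i dF/dx_i = d F  from the nonclassicality identity
   sum_i x_i^q dF/dx_i = G F  along the line; since u and v are F_q-rational,
   (t u_i + v_i)^q = t^q u_i + v_i, and the chain rule gives
   (t^q - t) g' = (G(t u + v) - d) g.
   A g without roots in F_q is coprime to t^q - t = prod_(x in F_q) (t - x), so g divides g',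
   which forces g' = 0.  But the t^(d-1)-coefficient of g' is d F(u) <> 0. *)

From HB Require Import structures.
From mathcomp Require Import all_boot all_order all_algebra all_field all_solvable.
From mathcomp Require Import mpoly ring zify.
Set Implicit Arguments. Unset Strict Implicit. Unset Printing Implicit Defensive.
Import GRing.Theory.
Local Open Scope ring_scope.

Section TopCoefficient.
Variable R : nzRingType.
Implicit Types P Q : {poly R}.

Lemma coefM_top P Q a b : (size P <= a.+1)%N -> (size Q <= b.+1)%N ->
  (P * Q)`_(a + b) = P`_a * Q`_b.
Proof.
move=> sP sQ; have a_lt : (a < (a + b).+1)%N by rewrite ltnS leq_addr.
rewrite coefM (bigD1 (Ordinal a_lt)) //= addKn big1 ?addr0 // => j /eqP neq_ja.
have [j_lt|j_gt|j_eq] := ltngtP j a.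
- by rewrite [Q`__]nth_default ?mulr0 //; apply: leq_trans sQ _; lia.
- by rewrite nth_default ?mul0r //; apply: leq_trans sP _.
- by case: neq_ja; apply: val_inj.
Qed.

Lemma prod_top_coef (I : Type) (s : seq I) (A : I -> {poly R}) (e : I -> nat) :
  (forall i, size (A i) <= (e i).+1)%N ->
  (size (\prod_(i <- s) A i)%R <= (\sum_(i <- s) e i).+1)%N /\
  (\prod_(i <- s) A i)`_(\sum_(i <- s) e i) = \prod_(i <- s) (A i)`_(e i).
Proof.
move=> sA; elim: s => [|i s [size_s coef_s]]; first by rewrite !big_nil size_poly1 coefC.
rewrite !big_cons coefM_top // coef_s; split=> //.
by apply: leq_trans (size_mul_leq _ _) _; have := sA i; lia.
Qed.

Lemma expr_top_coef P k : (size P <= 2)%N ->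
  (size (P ^+ k)%R <= k.+1)%N /\ (P ^+ k)`_k = P`_1 ^+ k.
Proof.
move=> sP; have := @prod_top_coef _ (index_iota 0 k) (fun=> P) (fun=> 1%N) (fun=> sP).
by rewrite !prodr_const_nat sum_nat_const_nat muln1 subn0.
Qed.

End TopCoefficient.

Section LineRestriction.
Variables (R : comNzRingType) (n : nat) (u v : 'I_n -> R).

Definition line_poly (i : 'I_n) : {poly R} := u i *: 'X + (v i)%:P.

Definition restr_line : {mpoly R[n]} -> {poly R} := mmap (@polyC R) line_poly.
HB.instance Definition _ := GRing.RMorphism.on restr_line.

Lemma restr_lineX i : restr_line 'X_i = line_poly i.
Proof. by rewrite /restr_line mmapX mmap1U. Qed.

Lemma restr_lineC c : restr_line c%:MP = c%:P.
Proof. by rewrite /restr_line mmapC. Qed.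

Lemma size_line_poly i : (size (line_poly i) <= 2)%N.
Proof.
apply: leq_trans (size_polyD _ _) _; rewrite geq_max (leq_trans (size_polyC_leq1 _)) // andbT.
by apply: leq_trans (size_scale_leq _ _) _; rewrite size_polyX.
Qed.

Lemma coef_line_poly1 i : (line_poly i)`_1 = u i.
Proof. by rewrite coefD coefZ coefX coefC /= mulr1 addr0. Qed.

Lemma horner_restr_line P x : (restr_line P).[x] = P.@[fun i => x * u i + v i].
Proof.
rewrite /restr_line /mmap mevalE horner_sum; apply: eq_bigr => m _.
rewrite hornerM hornerC /mmap1 horner_prod; congr (_ * _); apply: eq_bigr => i _.
by rewrite !hornerE mulrC.
Qed.

Lemma coef_restr_line_dhomog d P : P \is d.-homog -> (restr_line P)`_d = P.@[u].
Proof.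
move=> /dhomogP P_homog; rewrite /restr_line /mmap mevalE coef_sum.
apply: eq_big_seq => m m_supp; rewrite coefCM /mmap1; congr (_ * _).
have -> : d = (\sum_i m i)%N by rewrite -mdegE; exact/esym/P_homog.
have [_ ->] := prod_top_coef (index_enum 'I_n)
  (fun i => proj1 (expr_top_coef (m i) (size_line_poly i))).
by apply: eq_bigr => i _; rewrite (proj2 (expr_top_coef _ (size_line_poly i))) coef_line_poly1.
Qed.

Lemma deriv_restr_line P :
  (restr_line P)^`() = \sum_i u i *: restr_line P^`M(i).
Proof.
pose chain Q := (restr_line Q)^`() = \sum_i u i *: restr_line Q^`M(i).
have chainD Q1 Q2 : chain Q1 -> chain Q2 -> chain (Q1 + Q2).
  rewrite /chain rmorphD derivD => -> ->; rewrite -big_split /=.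
  by apply: eq_bigr => i _; rewrite mderivD rmorphD scalerDr.
have chainM Q1 Q2 : chain Q1 -> chain Q2 -> chain (Q1 * Q2).
  rewrite /chain rmorphM derivM => -> ->; rewrite mulr_suml mulr_sumr -big_split /=.
  by apply: eq_bigr => i _; rewrite mderivM rmorphD !rmorphM scalerDr scalerAl scalerAr.
have chainC c : chain c%:MP.
  by rewrite /chain restr_lineC derivC big1 // => i _; rewrite mderivC raddf0 scaler0.
have chainX i : chain 'X_i.
  rewrite /chain restr_lineX derivD derivC derivZ derivX addr0 (bigD1 i) //= big1 ?addr0.
    have U_subm : (U_(i) - U_(i))%MM = 0%MM by apply/mnmP => j; rewrite mnmBE subnn mnm0E.
    by rewrite mderivX mnm1E eqxx U_subm mpolyX0 scale1r rmorph1.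
  by move=> j /negbTE j_neq; rewrite mderivX mnm1E eq_sym j_neq scale0r raddf0 scaler0.
elim/mpolyind: P => [|c m P _ _ chainP]; first by rewrite -mpolyC0; exact: (chainC).
apply: (chainD) => //; rewrite -mul_mpolyC; apply: (chainM) => //.
rewrite mpolyXE_id; apply: (big_ind chain) => [|Q1 Q2|i _].
- by rewrite -mpolyC1; exact: (chainC).
- exact: (chainM).
- elim: (m i) => [|k IH]; first by rewrite expr0 -mpolyC1; exact: (chainC).
  by rewrite exprS; apply: (chainM).
Qed.

End LineRestriction.

Section Euler.
Variables (R : comNzRingType) (n : nat).

Lemma euler_mpolyX (m : 'X_{1..n}) :
  \sum_(i < n) 'X_i * ('X_[m] : {mpoly R[n]})^`M(i) = 'X_[m] *+ mdeg m.
Proof.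
have mulX_mderivX i : 'X_i * ('X_[m] : {mpoly R[n]})^`M(i) = (m i)%:R *: 'X_[m].
  rewrite mderivX -scalerAr; have [->|m_i_gt0] := posnP (m i); first by rewrite !scale0r.
  congr (_ *: _); rewrite -mpolyXD; congr 'X_[_]; apply/mnmP => j.
  by rewrite mnmDE mnmBE mnm1E; case: eqP => [<-|_] /=; lia.
by rewrite (eq_bigr _ (fun i _ => mulX_mderivX i)) -scaler_suml -natr_sum -mdegE scaler_nat.
Qed.

Lemma euler_dhomog d (P : {mpoly R[n]}) : P \is d.-homog ->
  \sum_(i < n) 'X_i * P^`M(i) = P *+ d.
Proof.
move=> /dhomogP P_homog; rewrite (mpolyE P) -sumrMnl.
under eq_bigr do rewrite raddf_sum mulr_sumr.
rewrite exchange_big /=; apply: eq_big_seq => m m_supp.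
rewrite -(P_homog m m_supp) scalerMnr -euler_mpolyX scaler_sumr.
by apply: eq_bigr => i _; rewrite mderivZ scalerAr.
Qed.

End Euler.

Lemma expr_card_line (K : finFieldType) (c e : K) :
  (c *: 'X + e%:P) ^+ #|K| = c *: 'X^#|K| + e%:P :> {poly K}.
Proof.
have [p _ pK] := finPcharP K.
have card_pnat : [pchar {poly K}].-nat #|K|.
  rewrite (eq_pnat _ (@pchar_poly K)) (eq_pnat _ (pcharf_eq pK)).
  by have := abelem_pgroup (fin_ring_pchar_abelem pK); rewrite /pgroup cardsT.
by rewrite exprDn_pchar // exprZn -rmorphXn !expf_card.
Qed.

Lemma Gauss_dvdp_prod_XsubC (K : fieldType) (g Q : {poly K}) (s : seq K) :
  {in s, forall x, ~~ root g x} -> (g %| (\prod_(x <- s) ('X - x%:P)) * Q) = (g %| Q).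
Proof.
elim: s => [|x s IH] g_rootfree; first by rewrite big_nil mul1r.
rewrite big_cons -mulrA Gauss_dvdpr ?coprimep_XsubC ?g_rootfree ?mem_head // IH // => y s_y.
by rewrite g_rootfree // in_cons s_y orbT.
Qed.

Lemma dvdp_deriv_eq0 (R : idomainType) (g : {poly R}) : g %| g^`() -> g^`() = 0.
Proof.
move=> g_dvd; apply/eqP; apply: contraTT g_dvd => g'_neq0.
have g_neq0 : g != 0 by apply: contraNneq g'_neq0 => ->; rewrite deriv0.
by apply/negP => /(dvdp_leq g'_neq0); rewrite leqNgt lt_size_deriv.
Qed.

Lemma restr_line_nonclassical (K : finFieldType) n d (F G : {mpoly K[n]})
    (u v : 'I_n -> K) :
  F \is d.-homog -> \sum_i 'X_i ^+ #|K| * F^`M(i) = G * F ->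
  ('X^#|K| - 'X) * (restr_line u v F)^`() = (restr_line u v G - d%:R) * restr_line u v F.
Proof.
move=> F_homog FG.
have frob : \sum_i line_poly u v i ^+ #|K| * restr_line u v F^`M(i)
    = restr_line u v G * restr_line u v F.
  rewrite -rmorphM -FG rmorph_sum; apply: eq_bigr => i _.
  by rewrite rmorphM rmorphXn /= restr_lineX.
have euler : \sum_i line_poly u v i * restr_line u v F^`M(i) = restr_line u v F *+ d.
  rewrite -rmorphMn -(euler_dhomog F_homog) rmorph_sum; apply: eq_bigr => i _.
  by rewrite rmorphM /= restr_lineX.
rewrite deriv_restr_line mulr_sumr mulrBl -frob mulr_natl -euler -sumrB.
by apply: eq_bigr => i _; rewrite /line_poly expr_card_line -!mul_polyC; ring.
Qed.

Theorem corollary2p3 (K : finFieldType) (p n d : nat) (F : {mpoly K[n.+1]}) :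
  p \in [pchar K] ->
  F != 0 -> F \is d.-homog -> ~~ (p %| d)%N ->
  frobenius_nonclassical F ->
  forall u v : 'I_n.+1 -> K, lin_indep2 u v ->
  exists a b : K, (a != 0 \/ b != 0) /\ F.@[fun i => a * u i + b * v i] = 0.
Proof.
move=> pK _ F_homog p_ndvd_d [G FG] u v _.
set g := restr_line u v F.
have [/existsP [x /rootP gx0] | /existsPn g_rootfree] := boolP [exists x, root g x].
  exists x, 1; split; first by right; exact: oner_neq0.
  by rewrite -gx0 horner_restr_line; apply: meval_eq => i /=; rewrite mul1r.
have [Fu0 | Fu_neq0] := eqVneq F.@[u] 0.
  exists 1, 0; split; first by left; exact: oner_neq0.
  by rewrite -[RHS]Fu0; apply: meval_eq => i /=; rewrite mul1r mul0r addr0.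
have g'_eq0 : g^`() = 0.
  apply: dvdp_deriv_eq0; rewrite -(@Gauss_dvdp_prod_XsubC _ _ _ (index_enum K)) //.
  by rewrite -finField_genPoly (restr_line_nonclassical u v F_homog FG) dvdp_mull.
have d_gt0 : (0 < d)%N by rewrite lt0n; apply: contraNneq p_ndvd_d => ->; rewrite dvdn0.
move/(congr1 (coefp d.-1)): g'_eq0 => /=.
rewrite coef_deriv prednK // coef0 coef_restr_line_dhomog // -mulr_natr => /eqP.
by rewrite mulf_eq0 (negbTE Fu_neq0) -(dvdn_pcharf pK) (negbTE p_ndvd_d).
Qed.
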